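(* Let $n\ge 2k\ge 2$ and let $S\subseteq\{0,1,\ldots,k-1\}$ with $|S|=s>1$, and let $X=\bigcup_{i\in S}J(n,k,i)$. If $X$ admits perfect state transfer at time $\tau$, then $n=2k$ and there is a permutation matrix $T$ of order two with no fixed points and a complex number $\lambda$ with $|\lambda|=1$ such that $\mathcal{H}_X(\tau)=\lambda T$.
   Context: $J(n,k,i)$ is the graph on the $k$-subsets of $\{1,\ldots,n\}$ with $A\sim B$ iff $|A\cap B|=i$; the union $\bigcup_{i\in S}J(n,k,i)$ has $A\sim B$ iff $|A\cap B|\in S$. For a simple graph $X$ with adjacency matrix $A$, $\mathcal{H}_X(t)=e^{itA}$. $X$ admits perfect state transfer at time $\tau>0$ if $|\mathcal{H}_X(\tau)_{u,v}|=1$ for some vertices $u\neq v$. *)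

(* Complex numbers are represented by
   pairs (real part, imaginary part) of Stdlib reals. *)
From Stdlib Require Import Reals Factorial.
From HB Require Import structures.
From mathcomp Require Import all_boot.

Set Implicit Arguments.
Unset Strict Implicit.
Unset Printing Implicit Defensive.

(* Vertices of J(n,k,_): the k-subsets of {0,...,n-1} (0-based copy of {1..n}). *)
Definition vert (n k : nat) := {A : {set 'I_n} | #|A| == k}.

(* Adjacency of X = \bigcup_{i in S} J(n,k,i), with S a subset of {0,...,k-1}:
   A ~ B iff |A cap B| in S. *)
Definition jadj (n k : nat) (S : {set 'I_k}) (A B : vert n k) : bool :=
  [exists i in S, #|val A :&: val B| == nat_of_ord i].

Fixpoint adjpow (n k : nat) (S : {set 'I_k}) (m : nat) (u v : vert n k) : nat :=
  match m with
  | 0 => nat_of_bool (u == v)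
  | m'.+1 => \sum_(w : vert n k) (nat_of_bool (jadj S u w)) * adjpow S m' w v
  end.

Definition ipow_re (m : nat) : R :=
  if m %% 4 == 0 then R1 else if m %% 4 == 2 then (Ropp R1) else R0.
Definition ipow_im (m : nat) : R :=
  if m %% 4 == 1 then R1 else if m %% 4 == 3 then (Ropp R1) else R0.

(* m-th term of e^{itA} = sum_m (it)^m A^m / m!, real and imaginary parts, entry (u,v). *)
Definition Hterm_re (n k : nat) (S : {set 'I_k}) (t : R) (u v : vert n k) (m : nat) : R :=
  Rdiv (Rmult (Rmult (ipow_re m) (pow t m)) (INR (adjpow S m u v))) (INR (Factorial.fact m)).
Definition Hterm_im (n k : nat) (S : {set 'I_k}) (t : R) (u v : vert n k) (m : nat) : R :=
  Rdiv (Rmult (Rmult (ipow_im m) (pow t m)) (INR (adjpow S m u v))) (INR (Factorial.fact m)).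

(* "H_X(t)_{u,v} = x + i y": the partial sums of the exponential series converge
   to x (real part) and y (imaginary part). *)
Definition H_entry (n k : nat) (S : {set 'I_k}) (t : R) (u v : vert n k) (x y : R) : Prop :=
  Un_cv (fun N => sum_f_R0 (Hterm_re S t u v) N) x /\
  Un_cv (fun N => sum_f_R0 (Hterm_im S t u v) N) y.

Definition PST (n k : nat) (S : {set 'I_k}) (tau : R) : Prop :=
  Rlt 0 tau /\
  exists (u v : vert n k) (x y : R),
    u <> v /\ H_entry S tau u v x y /\ Rplus (Rmult x x) (Rmult y y) = R1.

Definition perm_mat (n k : nat) (sigma : vert n k -> vert n k) (u v : vert n k) : R :=
  if v == sigma u then R1 else R0.

(* Every permutation p of {0,...,n-1} acts on k-subsets as an automorphism of
   X, so H(t)_{pu,pv} = H(t)_{u,v}.  H(t) is unitary (the Cauchy product of the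
   exponential series of e^{itA} and e^{-itA} telescopes by (1 - 1)^N = 0), so
   an entry of modulus one at (u,v) forces the rest of row u to vanish; hence
   every permutation fixing u fixes v.  Applied to transpositions this makes v
   the complement of u, so n = 2k, and transitivity of Sym(n) on k-subsets
   gives H(t)_{w,w^c} = H(t)_{u,v} for every w.  The argument does not use
   |S| > 1. *)

From Stdlib Require Import Reals Factorial Lra Lia.
From HB Require Import structures.
From mathcomp Require Import all_boot perm.
From Coquelicot Require Import Coquelicot.

Set Implicit Arguments.
Unset Strict Implicit.
Unset Printing Implicit Defensive.

Section Combinatorics.

Local Open Scope nat_scope.

Variables (n k : nat) (S : {set 'I_k}).
Implicit Types (u v w : vert n k) (p : {perm 'I_n}).

Lemma card_vert u : #|val u| = k.
Proof. exact/eqP/(valP u). Qed.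

Lemma vert_eq_sub u v : val u \subset val v -> u = v.
Proof.
move=> sub; apply: val_inj; apply/eqP.
by rewrite eqEcard sub !card_vert leqnn.
Qed.

Lemma jadj_sym u v : jadj S u v = jadj S v u.
Proof. by rewrite /jadj setIC. Qed.

Lemma adjpowD m l u v :
  adjpow S (m + l) u v = \sum_w adjpow S m u w * adjpow S l w v.
Proof.
elim: m u => [|m IH] u /=.
  rewrite (bigD1 u) //= eqxx mul1n big1 ?addn0 // => w /negbTE.
  by rewrite eq_sym => ->.
rewrite (eq_bigr (fun w => \sum_z jadj S u w * (adjpow S m w z * adjpow S l z v)));
  last by move=> w _; rewrite IH big_distrr.
rewrite exchange_big /=; apply: eq_bigr => z _.
by rewrite big_distrl /=; apply: eq_bigr => w _; rewrite mulnA.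
Qed.

Lemma adjpow1 u v : adjpow S 1 u v = jadj S u v.
Proof.
rewrite /= (bigD1 v) //= eqxx muln1 big1 ?addn0 // => w /negbTE ->.
by rewrite muln0.
Qed.

Lemma adjpow_sym m u v : adjpow S m u v = adjpow S m v u.
Proof.
elim: m u v => [|m IH] u v; first by rewrite /= eq_sym.
rewrite -{2}addn1 adjpowD; apply: eq_bigr => w _.
by rewrite adjpow1 jadj_sym IH mulnC.
Qed.

Lemma adjpow_le m u v : adjpow S m u v <= #|{: vert n k}| ^ m.
Proof.
elim: m u v => [|m IH] u v /=; first by case: (u == v).
rewrite expnS -[X in X * _]sum1_card big_distrl /=.
apply: leq_sum => w _; rewrite mul1n.
by case: (jadj S u w); rewrite ?mul1n ?mul0n.
Qed.

Lemma card_imset_vert p u : #|p @: val u| == k.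
Proof. by rewrite card_imset ?card_vert //; exact: perm_inj. Qed.

Definition vert_act p u : vert n k := exist _ (p @: val u) (card_imset_vert p u).

Lemma vert_act_inj p : injective (vert_act p).
Proof. by move=> u v /(congr1 val) /(imset_inj (@perm_inj _ p)) /val_inj. Qed.

Lemma jadj_act p u v : jadj S (vert_act p u) (vert_act p v) = jadj S u v.
Proof.
by rewrite /jadj /= -imsetI ?card_imset //; [exact: perm_inj | move=> x y _ _; exact: perm_inj].
Qed.

Lemma adjpow_act p m u v :
  adjpow S m (vert_act p u) (vert_act p v) = adjpow S m u v.
Proof.
elim: m u v => [|m IH] u v /=; first by rewrite (inj_eq (@vert_act_inj p)).
rewrite (reindex_inj (@vert_act_inj p)) /=.
by apply: eq_bigr => w _; rewrite jadj_act IH.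
Qed.

Lemma mem_tperm_imset (a c x : 'I_n) (A : {set 'I_n}) :
  (x \in tperm a c @: A) = (tperm a c x \in A).
Proof. by rewrite -{1}(tpermK a c x) mem_imset //; exact: perm_inj. Qed.

Lemma vert_act_tperm_id (a c : 'I_n) u :
  (a \in val u) = (c \in val u) -> vert_act (tperm a c) u = u.
Proof.
move=> Hac; apply: val_inj; apply/setP => x /=.
by rewrite mem_tperm_imset; case: tpermP => [->|->|] //; rewrite Hac.
Qed.

(* Induct on #|u0 :\: u|: a transposition swapping a point of u0 :\: u with a
   point of u :\: u0 brings u0 one step closer to u. *)
Lemma vert_act_ind (P : vert n k -> Prop) :
  (forall p u, P u -> P (vert_act p u)) -> forall u0 u, P u0 -> P u.
Proof.
move=> HP u0 u; move: {2}#|val u0 :\: val u| (leqnn #|val u0 :\: val u|) => d.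
elim: d u0 => [|d IH] u0.
  by rewrite leqn0 cards_eq0 setD_eq0 => /vert_eq_sub ->.
move=> Hd Pu0.
have [/eqP H0|] := boolP (val u0 :\: val u == set0).
  by apply: (IH u0); rewrite // H0 cards0.
case/set0Pn => a; rewrite inE => /andP [anu au0].
have : val u :\: val u0 != set0.
  have E : #|val u| = #|val u0| by rewrite !card_vert.
  rewrite -card_gt0 cardsD setIC E -cardsD card_gt0.
  by apply/set0Pn; exists a; rewrite inE anu au0.
case/set0Pn => c; rewrite inE => /andP [cnu0 cu].
apply: (IH (vert_act (tperm a c) u0)); last exact: HP.
rewrite -ltnS; apply: leq_trans Hd; apply: proper_card; apply/properP; split.
  apply/subsetP => x; rewrite !inE mem_tperm_imset => /andP [xnu].
  case: tpermP => [E|E|]; first by rewrite (negbTE cnu0).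
    by rewrite E cu in xnu.
  by move=> _ _ ->; rewrite xnu.
exists a; first by rewrite inE anu.
by rewrite !inE mem_tperm_imset tpermL (negbTE cnu0) andbF.
Qed.

Hypothesis k_gt0 : 0 < k.

Lemma vert_nonempty u : exists a, a \in val u.
Proof. by apply/set0Pn; rewrite -card_gt0 card_vert. Qed.

Section Stabilizer.

Variables u v : vert n k.
Hypothesis stab_fix : forall p, vert_act p u = u -> vert_act p v = v.

Lemma mem_stab_fix (a c : 'I_n) :
  (a \in val u) = (c \in val u) -> (c \in val v) = (a \in val v).
Proof.
move=> /vert_act_tperm_id /stab_fix /(congr1 (fun w => c \in val w)) /=.
by rewrite mem_tperm_imset tpermR.
Qed.

Lemma stab_fix_disjoint : u != v -> [disjoint val u & val v].
Proof.
move=> neq_uv; apply/pred0P => a /=; apply/negP => /andP [au av].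
have /subsetPn [c cu cnv] : ~~ (val u \subset val v).
  by apply: contra neq_uv => /vert_eq_sub ->.
by move: cnv; rewrite (@mem_stab_fix a c) ?av // au cu.
Qed.

Lemma stab_fix_compl : u != v -> val v = ~: val u.
Proof.
move=> neq_uv; have disj := stab_fix_disjoint neq_uv.
have [b bv] := vert_nonempty v.
have bu : b \notin val u by rewrite (disjointFl disj bv).
apply/setP => d; rewrite inE.
case du: (d \in val u); first by rewrite (disjointFr disj du).
by rewrite (@mem_stab_fix b d) // du (negbTE bu).
Qed.

End Stabilizer.

Lemma compl_vert_n u v : val v = ~: val u -> n = 2 * k.
Proof. by move=> vE; rewrite -(card_ord n) -(cardsC (val u)) -vE !card_vert addnn mul2n. Qed.

Section Complement.

Hypothesis n2k : n = 2 * k.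

Lemma card_compl_vert u : #|~: val u| == k.
Proof. by rewrite cardsCs setCK card_ord card_vert n2k mul2n -addnn addnK. Qed.

Definition compl u : vert n k := exist _ (~: val u) (card_compl_vert u).

Lemma complK : involutive compl.
Proof. by move=> u; apply: val_inj; rewrite /= setCK. Qed.

Lemma compl_neq u : compl u <> u.
Proof.
move=> /(congr1 val) /= E; have [a au] := vert_nonempty u.
by move: E => /setP /(_ a); rewrite inE au.
Qed.

Lemma vert_act_compl p u : vert_act p (compl u) = compl (vert_act p u).
Proof.
apply: val_inj; apply/setP => z /=; rewrite inE.
rewrite -{1}(permKV p z) mem_imset ?inE; last exact: perm_inj.
by rewrite -{2}(permKV p z) mem_imset //; exact: perm_inj.
Qed.

End Complement.

End Combinatorics.

Local Open Scope R_scope.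

Lemma RplusA : associative Rplus.
Proof. by move=> x y z; rewrite Rplus_assoc. Qed.

HB.instance Definition _ :=
  Monoid.isComLaw.Build R R0 Rplus RplusA Rplus_comm Rplus_0_l.

Lemma sum_f_R0_big (f : nat -> R) N :
  sum_f_R0 f N = \big[Rplus/R0]_(m < N.+1) f m.
Proof. by elim: N => [|N IH]; rewrite ?big_ord1 // big_ord_recr /= IH. Qed.

Lemma INR_sum (I : finType) (a : I -> nat) :
  INR (\sum_(i : I) a i) = \big[Rplus/R0]_(i : I) INR (a i).
Proof. exact: (big_morph INR plus_INR). Qed.

Lemma big_Rmult_distrr (I : finType) c (F : I -> R) :
  c * \big[Rplus/R0]_(i : I) F i = \big[Rplus/R0]_(i : I) (c * F i).
Proof.
by apply: (big_endo (fun x => c * x)); [move=> x y; rewrite Rmult_plus_distr_l | rewrite Rmult_0_r].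
Qed.

Lemma INR_expn a l : INR (a ^ l) = INR a ^ l.
Proof. by elim: l => [|l IH] //=; rewrite expnS mult_INR IH. Qed.

Lemma is_series_of_partial_sums (a : nat -> R) l :
  (forall N, sum_f_R0 a N = l) -> is_series a l.
Proof.
move=> H; apply/is_series_Reals => eps He; exists 0%nat => N _.
by rewrite H /Rdist Rminus_diag Rabs_R0.
Qed.

Lemma is_series_big (I : Type) (r : seq I) (f : I -> nat -> R) (l : I -> R) :
  (forall i, is_series (f i) (l i)) ->
  is_series (fun N => \big[Rplus/R0]_(i <- r) f i N) (\big[Rplus/R0]_(i <- r) l i).
Proof.
move=> H; elim: r => [|i r IH].
  rewrite big_nil; apply: is_series_of_partial_sums => N.
  by elim: N => [|N IHN] /=; rewrite big_nil // IHN Rplus_0_r.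
rewrite big_cons.
apply: (is_series_ext (fun N => plus (f i N) (\big[Rplus/R0]_(j <- r) f j N))).
  by move=> N; rewrite big_cons.
exact: is_series_plus.
Qed.

Lemma ex_series_exp_bound (c : nat -> R) (a : nat -> nat) t D :
  (forall m, Rabs (c m) <= 1) -> (forall m, (a m <= D ^ m)%nat) ->
  ex_series (fun m => Rabs (c m * t ^ m * INR (a m) / INR (fact m))).
Proof.
move=> c_le1 a_le; apply: (@ex_series_le _ _ _ (fun m => (Rabs t * INR D) ^ m / INR (fact m))).
  move=> m; rewrite /norm /= /abs /= Rabs_Rabsolu.
  have hA : INR (a m) <= INR D ^ m by rewrite -INR_expn; apply/le_INR/leP.
  have hf := INR_fact_lt_0 m.
  rewrite /Rdiv !Rabs_mult Rabs_inv (Rabs_pos_eq (INR (fact m))); last lra.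
  rewrite (Rabs_pos_eq (INR (a m))) ?Rpow_mult_distr -?RPow_abs; last exact: pos_INR.
  apply: Rmult_le_compat_r; first by left; apply: Rinv_0_lt_compat.
  have tm_ge0 : 0 <= Rabs t ^ m by apply/pow_le/Rabs_pos.
  have := c_le1 m; have := Rabs_pos (c m).
  have : 0 <= Rabs t ^ m * INR (a m) by apply/Rmult_le_pos/pos_INR.
  have : Rabs t ^ m * INR (a m) <= Rabs t ^ m * INR D ^ m by apply: Rmult_le_compat_l.
  nra.
exists (exp (Rabs t * INR D)).
apply: (is_series_ext _ _ _ _ (is_exp_Reals _)) => m.
by rewrite pow_n_pow.
Qed.

Lemma ipow_re_le1 m : Rabs (ipow_re m) <= 1.
Proof. by rewrite /ipow_re; repeat case: ifP => _; rewrite ?Rabs_Ropp ?Rabs_R1 ?Rabs_R0; lra. Qed.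

Lemma ipow_im_le1 m : Rabs (ipow_im m) <= 1.
Proof. by rewrite /ipow_im; repeat case: ifP => _; rewrite ?Rabs_Ropp ?Rabs_R1 ?Rabs_R0; lra. Qed.

Lemma pow_Ropp1_mod4 l : (-1) ^ l = (-1) ^ (l %% 4).
Proof.
rewrite {1}(divn_eq l 4) -plusE pow_add mulnC -multE pow_mult.
have -> : (-1) ^ 4 = 1 by simpl; ring.
by rewrite pow1 Rmult_1_l.
Qed.

(* Re(i^m) Re(i^l) + Im(i^m) Im(i^l) = Re(i^m conj(i^l)), and conj(i^l) = (-1)^l i^l. *)
Lemma ipow_mul_conj m l :
  ipow_re m * ipow_re l + ipow_im m * ipow_im l = (-1) ^ l * ipow_re (m + l).
Proof.
rewrite pow_Ropp1_mod4 /ipow_re /ipow_im -modnDm.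
case: (m %% 4)%nat (ltn_pmod m (isT : (0 < 4)%nat)) => [|[|[|[|r]]]] // _;
case: (l %% 4)%nat (ltn_pmod l (isT : (0 < 4)%nat)) => [|[|[|[|q]]]] // _; simpl; ring.
Qed.

Lemma sum_alt_inv_fact N :
  \big[Rplus/R0]_(m < N.+1) ((-1) ^ (N - m) / (INR (fact m) * INR (fact (N - m))))
  = if N is 0%nat then 1 else 0.
Proof.
rewrite -(sum_f_R0_big (fun m => (-1) ^ (N - m) / (INR (fact m) * INR (fact (N - m))))).
transitivity (/ INR (fact N) * (1 + -1) ^ N).
  rewrite Binomial.binomial scal_sum; apply: PartSum.sum_eq => i _.
  rewrite /Binomial.C pow1 ?minusE.
  have := INR_fact_neq_0 i; have := INR_fact_neq_0 (N - i); have := INR_fact_neq_0 N.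
  by move=> *; field.
case: N => [|N]; first by rewrite /=; field.
by rewrite Rplus_opp_r pow_i ?Rmult_0_r //; lia.
Qed.

Section ExponentialSeries.

Variables (n k : nat) (S : {set 'I_k}) (t : R).
Implicit Types (u v w : vert n k) (p : {perm 'I_n}).

Definition H_re u v := Series (Hterm_re S t u v).
Definition H_im u v := Series (Hterm_im S t u v).

Lemma ex_series_Hterm_re u v : ex_series (fun m => Rabs (Hterm_re S t u v m)).
Proof. exact: (ex_series_exp_bound _ ipow_re_le1 (fun m => adjpow_le S m u v)). Qed.

Lemma ex_series_Hterm_im u v : ex_series (fun m => Rabs (Hterm_im S t u v m)).
Proof. exact: (ex_series_exp_bound _ ipow_im_le1 (fun m => adjpow_le S m u v)). Qed.

Lemma H_entryP u v x y : H_entry S t u v x y <-> x = H_re u v /\ y = H_im u v.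
Proof.
split.
  by case=> /is_series_Reals/is_series_unique <- /is_series_Reals/is_series_unique <-.
case=> -> ->; split; apply/is_series_Reals/Series_correct/ex_series_Rabs.
  exact: ex_series_Hterm_re.
exact: ex_series_Hterm_im.
Qed.

Lemma H_re_act p u v : H_re (vert_act p u) (vert_act p v) = H_re u v.
Proof. by apply: Series_ext => m; rewrite /Hterm_re adjpow_act. Qed.

Lemma H_im_act p u v : H_im (vert_act p u) (vert_act p v) = H_im u v.
Proof. by apply: Series_ext => m; rewrite /Hterm_im adjpow_act. Qed.

Lemma Hterm_mul_conj u w m l :
  Hterm_re S t u w m * Hterm_re S t u w l + Hterm_im S t u w m * Hterm_im S t u w l =
  (-1) ^ l * ipow_re (m + l) * t ^ (m + l) / (INR (fact m) * INR (fact l)) *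
  INR (adjpow S m u w * adjpow S l w u).
Proof.
rewrite -ipow_mul_conj mult_INR (adjpow_sym S l w u) -plusE pow_add /Hterm_re /Hterm_im.
have := INR_fact_neq_0 m; have := INR_fact_neq_0 l.
by move=> *; field.
Qed.

(* N-th coefficient of the Cauchy product computing (H H^* )_{u,u}. *)
Lemma H_row_cauchy u N :
  \big[Rplus/R0]_w
    (sum_f_R0 (fun m => Hterm_re S t u w m * Hterm_re S t u w (N - m)) N +
     sum_f_R0 (fun m => Hterm_im S t u w m * Hterm_im S t u w (N - m)) N)
  = if N is 0%nat then 1 else 0.
Proof.
pose K m := (-1) ^ (N - m) / (INR (fact m) * INR (fact (N - m))).
transitivity (\big[Rplus/R0]_(m < N.+1) (ipow_re N * t ^ N * INR (adjpow S N u u) * K m)).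
  rewrite (eq_bigr (fun w => \big[Rplus/R0]_(m < N.+1)
      (ipow_re N * t ^ N * K m * INR (adjpow S m u w * adjpow S (N - m) w u)))).
    rewrite exchange_big /=; apply: eq_bigr => m _.
    by rewrite -big_Rmult_distrr -INR_sum -adjpowD subnKC ?leq_ord //; ring.
  move=> w _; rewrite -plus_sum sum_f_R0_big; apply: eq_bigr => m _.
  by rewrite Hterm_mul_conj subnKC ?leq_ord // /K; field; split; exact: INR_fact_neq_0.
rewrite -big_Rmult_distrr /K sum_alt_inv_fact; clear K.
by case: N => [|N]; rewrite ?Rmult_0_r //= eqxx /ipow_re /=; ring.
Qed.

Lemma H_row_norm u :
  \big[Rplus/R0]_w (H_re u w * H_re u w + H_im u w * H_im u w) = 1.
Proof.
set f := fun w N =>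
  sum_f_R0 (fun m => Hterm_re S t u w m * Hterm_re S t u w (N - m)) N +
  sum_f_R0 (fun m => Hterm_im S t u w m * Hterm_im S t u w (N - m)) N.
have Hcauchy : is_series (fun N => \big[Rplus/R0]_w f w N)
    (\big[Rplus/R0]_w (H_re u w * H_re u w + H_im u w * H_im u w)).
  apply: is_series_big => w.
  apply: (is_series_plus (fun N =>
    sum_f_R0 (fun m => Hterm_re S t u w m * Hterm_re S t u w (N - m)) N)).
    have Hre := ex_series_Hterm_re u w.
    by apply: is_series_mult => //; apply/Series_correct/ex_series_Rabs.
  have Him := ex_series_Hterm_im u w.
  by apply: is_series_mult => //; apply/Series_correct/ex_series_Rabs.
have Hone : is_series (fun N => \big[Rplus/R0]_w f w N) 1.
  apply: is_series_of_partial_sums => N.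
  rewrite (PartSum.sum_eq _ (fun N => if N is 0%nat then 1 else 0)).
    by elim: N => [|N IH] //=; rewrite IH Rplus_0_r.
  by move=> i _; rewrite -(H_row_cauchy u i).
by rewrite -(is_series_unique _ _ Hcauchy) (is_series_unique _ _ Hone).
Qed.

Lemma H_row_support u v :
  H_re u v * H_re u v + H_im u v * H_im u v = 1 ->
  forall w, w <> v -> H_re u w = 0 /\ H_im u w = 0.
Proof.
move=> Huv w /eqP neq_wv.
set F := fun w => H_re u w * H_re u w + H_im u w * H_im u w.
have F_ge0 z : 0 <= F z by rewrite /F; nra.
have := H_row_norm u; rewrite -/F (bigD1 v) // (bigD1 w) //=.
set rest := \big[Rplus/R0]_(i | _) _.
have : 0 <= rest by apply: big_ind => //; [lra | move=> a b; lra | move=> *; exact: F_ge0].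
have := F_ge0 w; rewrite /F in Huv * => *.
split; nra.
Qed.

Lemma stab_fix_of_unit_entry u v :
  H_re u v * H_re u v + H_im u v * H_im u v = 1 ->
  forall p, vert_act p u = u -> vert_act p v = v.
Proof.
move=> Huv p pu; apply/eqP/negP => /negP/eqP neq.
have [] := H_row_support Huv neq.
rewrite -{1}pu -{2}pu H_re_act H_im_act => re0 im0.
by move: Huv; rewrite re0 im0; lra.
Qed.

Lemma H_compl_const (n2k : n = (2 * k)%nat) u0 u :
  H_re u (compl n2k u) = H_re u0 (compl n2k u0) /\
  H_im u (compl n2k u) = H_im u0 (compl n2k u0).
Proof.
apply: (@vert_act_ind n k (fun w => H_re w (compl n2k w) = H_re u0 (compl n2k u0) /\
                                   H_im w (compl n2k w) = H_im u0 (compl n2k u0)) _ u0) => //.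
by move=> p w; rewrite -vert_act_compl H_re_act H_im_act.
Qed.

End ExponentialSeries.

Theorem mainTheorem19 (n k : nat) (S : {set 'I_k}) (tau : R) :
  (1 <= k)%N -> (2 * k <= n)%N -> (1 < #|S|)%N ->
  PST n S tau ->
  n = (2 * k)%N /\
  exists (sigma : vert n k -> vert n k) (a b : R),
    (forall u, sigma (sigma u) = u) /\
    (forall u, sigma u <> u) /\
    Rplus (Rmult a a) (Rmult b b) = R1 /\
    (forall u v : vert n k,
        H_entry S tau u v (Rmult a (perm_mat sigma u v)) (Rmult b (perm_mat sigma u v))).
Proof.
move=> k_gt0 _ _ [_ [u0 [v0 [x [y [neq_uv [/H_entryP [-> ->] Hnorm]]]]]]].
have v0E : val v0 = ~: val u0.
  apply: (stab_fix_compl k_gt0 (stab_fix_of_unit_entry Hnorm)).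
  exact/eqP.
have n2k := compl_vert_n v0E.
have v0_compl : v0 = compl n2k u0 by apply: val_inj.
split=> //; exists (compl n2k), (H_re S tau u0 v0), (H_im S tau u0 v0).
split; first exact: complK.
split; first exact: compl_neq.
split=> // u v; apply/H_entryP; rewrite /perm_mat v0_compl.
have [re_u im_u] := H_compl_const S tau n2k u0 u.
case: eqP => [->|neq_v]; first by rewrite re_u im_u !Rmult_1_r.
have Hnorm_u : H_re S tau u (compl n2k u) * H_re S tau u (compl n2k u) +
               H_im S tau u (compl n2k u) * H_im S tau u (compl n2k u) = 1.
  by rewrite re_u im_u -v0_compl.
by rewrite !Rmult_0_r; have [-> ->] := H_row_support Hnorm_u neq_v.
Qed.
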